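(* Let $A$ (in $\mathcal H$) and $B$ (in $\mathcal K$) be closed densely defined operators with $A\dashv B$, with bounded intertwining operator $T$. Then: (i) $\sigma_p(A)\subseteq\sigma_p(B)$ and for every $\lambda\in\sigma_p(A)$, $m_A(\lambda)\le m_B(\lambda)$, where $m_A(\lambda)$ denotes the multiplicity (dimension of the eigenspace) of $\lambda$ as an eigenvalue of $A$; (ii) $\sigma_r(B)\subseteq\sigma_r(A)$; (iii) if $TD(A)=D(B)$, then $\sigma_p(B)=\sigma_p(A)$; (iv) if $T^{-1}$ is bounded (on its domain $R(T)$) and $TD(A)$ is a core for $B$, then $\sigma_p(B)\subseteq\sigma(A)$.
   Context: A bounded operator $T:\mathcal H\to\mathcal K$ is a bounded intertwining operator for $A$ and $B$ if $T D(A)\subseteq D(B)$ and $BT\xi=TA\xi$ for all $\xi\in D(A)$. $A$ is quasi-similar to $B$, written $A\dashv B$, if there is a bounded intertwining operator $T$ for $A$ and $B$ that is injective and whose inverse $T^{-1}$ (defined on $R(T)$) is densely defined, but not necessarily bounded. Spectral notions: $\rho(A)$ = set of $\lambda$ with $A-\lambda I$ injective and $(A-\lambda I)^{-1}$ bounded everywhere defined; $\sigma(A)=\mathbb C\setminus \rho(A)$; $\sigma_p(A)$ = eigenvalues; $\sigma_r(A)$ = set of $\lambda$ with $A-\lambda I$ injective and non-dense range. *)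

From Stdlib Require Import Reals.
Open Scope R_scope.

Record Cplx := mkC { Re : R ; Im : R }.
Definition C0 : Cplx := mkC 0 0.
Definition C1 : Cplx := mkC 1 0.
Definition Cadd (a b : Cplx) : Cplx := mkC (Re a + Re b) (Im a + Im b).
Definition Cmul (a b : Cplx) : Cplx :=
  mkC (Re a * Re b - Im a * Im b) (Re a * Im b + Im a * Re b).
Definition Cconj (a : Cplx) : Cplx := mkC (Re a) (- Im a).

Record Hilbert := {
  hcar :> Type;
  hzero : hcar;
  hadd : hcar -> hcar -> hcar;
  hopp : hcar -> hcar;
  hscal : Cplx -> hcar -> hcar;
  hinner : hcar -> hcar -> Cplx;
  hadd_assoc : forall x y z, hadd x (hadd y z) = hadd (hadd x y) z;
  hadd_comm : forall x y, hadd x y = hadd y x;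
  hadd_0 : forall x, hadd x hzero = x;
  hadd_opp : forall x, hadd x (hopp x) = hzero;
  hscal_1 : forall x, hscal C1 x = x;
  hscal_assoc : forall a b x, hscal a (hscal b x) = hscal (Cmul a b) x;
  hscal_distr_v : forall a x y, hscal a (hadd x y) = hadd (hscal a x) (hscal a y);
  hscal_distr_s : forall a b x, hscal (Cadd a b) x = hadd (hscal a x) (hscal b x);
  hinner_add_l : forall x y z, hinner (hadd x y) z = Cadd (hinner x z) (hinner y z);
  hinner_scal_l : forall a x y, hinner (hscal a x) y = Cmul a (hinner x y);
  hinner_conj : forall x y, hinner y x = Cconj (hinner x y);
  hinner_pos : forall x, 0 <= Re (hinner x x);
  hinner_def : forall x, hinner x x = C0 -> x = hzero;
  hcomplete : forall u : nat -> hcar,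
    (forall eps, eps > 0 -> exists N, forall m n, (N <= m)%nat -> (N <= n)%nat ->
        sqrt (Re (hinner (hadd (u m) (hopp (u n))) (hadd (u m) (hopp (u n))))) < eps) ->
    exists l, forall eps, eps > 0 -> exists N, forall n, (N <= n)%nat ->
        sqrt (Re (hinner (hadd (u n) (hopp l)) (hadd (u n) (hopp l)))) < eps
}.

Arguments hzero {h}.
Arguments hadd {h}.
Arguments hopp {h}.
Arguments hscal {h}.
Arguments hinner {h}.

Definition hsub {H : Hilbert} (x y : H) : H := hadd x (hopp y).
Definition norm {H : Hilbert} (x : H) : R := sqrt (Re (hinner x x)).

Definition converges {H : Hilbert} (u : nat -> H) (l : H) : Prop :=
  forall eps, eps > 0 -> exists N, forall n, (N <= n)%nat -> norm (hsub (u n) l) < eps.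

Definition dense {H : Hilbert} (S : H -> Prop) : Prop :=
  forall x eps, eps > 0 -> exists y, S y /\ norm (hsub x y) < eps.

Definition subspace {H : Hilbert} (S : H -> Prop) : Prop :=
  S hzero /\ (forall x y, S x -> S y -> S (hadd x y)) /\
  (forall a x, S x -> S (hscal a x)).

Record Op (H K : Hilbert) := {
  dom : H -> Prop;
  app : H -> K;
  dom_subspace : subspace dom;
  app_add : forall x y, dom x -> dom y -> app (hadd x y) = hadd (app x) (app y);
  app_scal : forall a x, dom x -> app (hscal a x) = hscal a (app x)
}.
Arguments dom {H K}.
Arguments app {H K}.

Definition densely_defined {H K : Hilbert} (A : Op H K) : Prop := dense (dom A).

Definition closed_op {H K : Hilbert} (A : Op H K) : Prop :=
  forall (u : nat -> H) (x : H) (y : K),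
    (forall n, dom A (u n)) -> converges u x -> converges (fun n => app A (u n)) y ->
    dom A x /\ app A x = y.

Definition bounded_op {H K : Hilbert} (T : H -> K) : Prop :=
  (forall x y, T (hadd x y) = hadd (T x) (T y)) /\
  (forall a x, T (hscal a x) = hscal a (T x)) /\
  exists M, forall x, norm (T x) <= M * norm x.

Definition intertwining {H K : Hilbert} (T : H -> K) (A : Op H H) (B : Op K K) : Prop :=
  bounded_op T /\
  forall x, dom A x -> dom B (T x) /\ app B (T x) = T (app A x).

Definition range {H K : Hilbert} (T : H -> K) (y : K) : Prop := exists x, y = T x.

(** T realises the quasi-similarity A ⊣ B: bounded intertwining, injective,
    and T^{-1} (defined on R(T)) densely defined, i.e. R(T) dense. *)
Definition quasi_similar_via {H K : Hilbert} (T : H -> K) (A : Op H H) (B : Op K K) : Prop :=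
  intertwining T A B /\ (forall x y, T x = T y -> x = y) /\ dense (range T).

Definition quasi_similar {H K : Hilbert} (A : Op H H) (B : Op K K) : Prop :=
  exists T, quasi_similar_via T A B.

Definition shift {H : Hilbert} (A : Op H H) (l : Cplx) (x : H) : H :=
  hsub (app A x) (hscal l x).

Definition resolvent_set {H : Hilbert} (A : Op H H) (l : Cplx) : Prop :=
  (forall x y, dom A x -> dom A y -> shift A l x = shift A l y -> x = y) /\
  (forall y, exists x, dom A x /\ shift A l x = y) /\
  (exists M, forall x, dom A x -> norm x <= M * norm (shift A l x)).

Definition spectrum {H : Hilbert} (A : Op H H) (l : Cplx) : Prop :=
  ~ resolvent_set A l.

Definition point_spectrum {H : Hilbert} (A : Op H H) (l : Cplx) : Prop :=
  exists x, dom A x /\ x <> hzero /\ app A x = hscal l x.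

Definition residual_spectrum {H : Hilbert} (A : Op H H) (l : Cplx) : Prop :=
  (forall x y, dom A x -> dom A y -> shift A l x = shift A l y -> x = y) /\
  ~ dense (fun y => exists x, dom A x /\ y = shift A l x).

Definition eigenspace {H : Hilbert} (A : Op H H) (l : Cplx) (x : H) : Prop :=
  dom A x /\ app A x = hscal l x.

(** * Hilbert dimension of a (closed) subspace: cardinality of an
      orthonormal basis; cardinals compared via injections. *)
Inductive span {H : Hilbert} (S : H -> Prop) : H -> Prop :=
| span_zero : span S hzero
| span_gen : forall x, S x -> span S x
| span_add : forall x y, span S x -> span S y -> span S (hadd x y)
| span_scal : forall a x, span S x -> span S (hscal a x).

Definition orthonormal {H : Hilbert} (S : H -> Prop) : Prop :=
  (forall x, S x -> hinner x x = C1) /\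
  (forall x y, S x -> S y -> x <> y -> hinner x y = C0).

Definition orthonormal_basis {H : Hilbert} (V S : H -> Prop) : Prop :=
  (forall x, S x -> V x) /\ orthonormal S /\
  (forall x, V x -> forall eps, eps > 0 -> exists y, span S y /\ norm (hsub x y) < eps).

Definition dim_le {H K : Hilbert} (V : H -> Prop) (W : K -> Prop) : Prop :=
  exists (SV : H -> Prop) (SW : K -> Prop),
    orthonormal_basis V SV /\ orthonormal_basis W SW /\
    exists f : {x : H | SV x} -> {y : K | SW y},
      forall a b, f a = f b -> a = b.

Definition multiplicity_le {H K : Hilbert} (A : Op H H) (B : Op K K) (l : Cplx) : Prop :=
  dim_le (eigenspace A l) (eigenspace B l).

Definition image {H K : Hilbert} (T : H -> K) (D : H -> Prop) (y : K) : Prop :=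
  exists x, D x /\ y = T x.

Definition core {K : Hilbert} (D : K -> Prop) (B : Op K K) : Prop :=
  (forall y, D y -> dom B y) /\
  (forall y, dom B y -> forall eps, eps > 0 ->
     exists z, D z /\ norm (hsub z y) < eps /\ norm (hsub (app B z) (app B y)) < eps).

(* (i) and (iii): [T] maps eigenvectors of [A] injectively to eigenvectors of [B], and is onto
   [D(B)] when [T D(A) = D(B)].  (ii): [T] maps the range of [A - l] into that of [B - l], so a
   dense range for [A - l] gives a dense range for [B - l].  (iv): a resolvent bound for [A],
   pushed through [T] and the bounded [T^-1], gives [|z| <= C |(B - l) z|] on [T D(A)]; as this
   is a core the bound holds on [D(B)], which leaves no eigenvector for [l].
   Multiplicities: [T] maps [ker (A - l)] injectively into [ker (B - l)], and an orthonormal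
   basis of the first then injects into one of the second, by counting dimensions when the
   latter is finite and by Bessel's inequality together with [|S x nat| = |S|] otherwise. *)

From Pilot Require Import Defs.
From Stdlib Require Import Reals.
Open Scope R_scope.
From Stdlib Require Import Lra Lia List Classical ClassicalEpsilon Cantor.
From mathcomp Require classical_sets.
Import ListNotations.
(* Re-imported so that its [C0] and [C1] shadow the homonyms of [Reals]. *)
Import Defs.

(** * Complex numbers and Hilbert spaces *)

Lemma Ceq (a b : Cplx) : Re a = Re b -> Im a = Im b -> a = b.
Proof. destruct a, b; simpl; intros; subst; reflexivity. Qed.

Ltac cring := apply Ceq; simpl; ring.

Definition Cabs2 (a : Cplx) := Re a * Re a + Im a * Im a.
Definition Cabs (a : Cplx) := sqrt (Cabs2 a).
Definition Cm1 := mkC (-1) 0.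

Lemma Cabs2_ge0 a : 0 <= Cabs2 a. Proof. unfold Cabs2; nra. Qed.
Lemma Cabs_ge0 a : 0 <= Cabs a. Proof. apply sqrt_pos. Qed.

Lemma Cabs2_pos a : a <> C0 -> 0 < Cabs2 a.
Proof.
  intro N. unfold Cabs2. destruct (Req_dec (Re a) 0); destruct (Req_dec (Im a) 0).
  - exfalso; apply N; apply Ceq; simpl; auto.
  - nra.
  - nra.
  - nra.
Qed.

Lemma Cabs_m1 : Cabs Cm1 = 1.
Proof. unfold Cabs, Cabs2; simpl. replace (-1 * -1 + 0 * 0) with 1 by lra. apply sqrt_1. Qed.

Lemma C1_neq_C0 : C1 <> C0.
Proof. intro E. apply (f_equal Re) in E. simpl in E. lra. Qed.

Arguments hadd_assoc {h}. Arguments hadd_comm {h}. Arguments hadd_0 {h}. Arguments hadd_opp {h}.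
Arguments hscal_1 {h}. Arguments hscal_assoc {h}. Arguments hscal_distr_v {h}.
Arguments hscal_distr_s {h}. Arguments hinner_add_l {h}. Arguments hinner_scal_l {h}.
Arguments hinner_conj {h}. Arguments hinner_pos {h}. Arguments hinner_def {h}.

Section HilbertSpace.
Variable H : Hilbert.
Implicit Types x y z : H.

Lemma hadd_0l x : hadd hzero x = x.
Proof. rewrite hadd_comm; apply hadd_0. Qed.

Lemma hadd_cancel x y z : hadd x y = hadd x z -> y = z.
Proof.
  intro E.
  assert (E2 : hadd (hopp x) (hadd x y) = hadd (hopp x) (hadd x z)) by (rewrite E; reflexivity).
  rewrite !hadd_assoc, (hadd_comm (hopp x) x), hadd_opp, !hadd_0l in E2. exact E2.
Qed.

Lemma hscal_C0 x : hscal C0 x = hzero.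
Proof.
  apply (hadd_cancel (hscal C0 x)). rewrite hadd_0, <- hscal_distr_s.
  f_equal. apply Ceq; simpl; lra.
Qed.

Lemma hopp_scal x : hopp x = hscal Cm1 x.
Proof.
  apply (hadd_cancel x). rewrite hadd_opp. rewrite <- (hscal_1 x) at 1.
  rewrite <- hscal_distr_s, <- (hscal_C0 x). f_equal. apply Ceq; simpl; lra.
Qed.

Lemma hscal_zero a : hscal a (@hzero H) = hzero.
Proof. rewrite <- (hscal_C0 hzero), hscal_assoc. f_equal. apply Ceq; simpl; lra. Qed.

Lemma hsub_eq0 x y : hsub x y = hzero -> x = y.
Proof.
  unfold hsub; intro E. apply (hadd_cancel (hopp y)).
  rewrite hadd_comm, E, hadd_comm, hadd_opp. reflexivity.
Qed.

Lemma hinner_add_r x y z : hinner x (hadd y z) = Cadd (hinner x y) (hinner x z).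
Proof.
  rewrite hinner_conj, hinner_add_l, (hinner_conj y x), (hinner_conj z x).
  apply Ceq; simpl; lra.
Qed.

Lemma hinner_scal_r a x y : hinner x (hscal a y) = Cmul (Cconj a) (hinner x y).
Proof. rewrite hinner_conj, hinner_scal_l, (hinner_conj y x). apply Ceq; simpl; lra. Qed.

Lemma hinner_0l y : hinner hzero y = C0.
Proof. rewrite <- (hscal_C0 hzero), hinner_scal_l. apply Ceq; simpl; lra. Qed.

Lemma hinner_0r y : hinner y hzero = C0.
Proof. rewrite hinner_conj, hinner_0l. apply Ceq; simpl; lra. Qed.

Lemma hinner_self_im x : Im (hinner x x) = 0.
Proof. pose proof (hinner_conj x x) as E. apply (f_equal Im) in E. simpl in E. lra. Qed.

Lemma norm_ge0 x : 0 <= norm x. Proof. apply sqrt_pos. Qed.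

Lemma norm_sq x : norm x * norm x = Re (hinner x x).
Proof. unfold norm. apply sqrt_sqrt, hinner_pos. Qed.

Lemma norm_eq0 x : norm x = 0 -> x = hzero.
Proof.
  intro E. apply hinner_def. pose proof (norm_sq x) as S. rewrite E in S.
  apply Ceq; simpl; [lra | apply hinner_self_im].
Qed.

Lemma norm_zero : norm (@hzero H) = 0.
Proof. unfold norm. rewrite hinner_0l. apply sqrt_0. Qed.

Lemma inner_expand x y a :
  Re (hinner (hadd x (hscal a y)) (hadd x (hscal a y))) =
  Re (hinner x x) + 2 * (Re a * Re (hinner y x) - Im a * Im (hinner y x))
  + Cabs2 a * Re (hinner y y).
Proof.
  rewrite hinner_add_l, !hinner_add_r, !hinner_scal_l, !hinner_scal_r, (hinner_conj y x).
  pose proof (hinner_self_im y). unfold Cabs2. simpl. nra.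
Qed.

(* Expand [0 <= <x + a y, x + a y>] at the minimising scalar [a = - <x, y> / <y, y>]. *)
Lemma cauchy_schwarz x y : Cabs2 (hinner x y) <= Re (hinner x x) * Re (hinner y y).
Proof.
  destruct (Req_dec (Re (hinner y y)) 0) as [Hy|Hy].
  - assert (y = hzero) as -> by (apply norm_eq0; unfold norm; rewrite Hy; apply sqrt_0).
    rewrite hinner_0r, hinner_0l. unfold Cabs2; simpl. lra.
  - pose proof (hinner_pos y) as Py. set (Y := Re (hinner y y)) in *.
    set (p := Re (hinner x y)). set (q := Im (hinner x y)).
    pose proof (hinner_pos (hadd x (hscal (mkC (- p / Y) (- q / Y)) y))) as P.
    rewrite inner_expand, (hinner_conj x y) in P. unfold Cabs2 in *. simpl in P.
    fold p q Y in P. fold p q.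
    assert (0 < Y) by lra.
    assert (E1 : - p / Y * p - - q / Y * - q = - (p * p + q * q) / Y) by (field; lra).
    assert (E2 : (- p / Y * (- p / Y) + - q / Y * (- q / Y)) * Y = (p * p + q * q) / Y)
      by (field; lra).
    rewrite E1, E2 in P.
    assert (E3 : 0 <= (Re (hinner x x) - (p * p + q * q) / Y) * Y)
      by (apply Rmult_le_pos; lra).
    replace ((Re (hinner x x) - (p * p + q * q) / Y) * Y)
      with (Re (hinner x x) * Y - (p * p + q * q)) in E3 by (field; lra).
    lra.
Qed.

Lemma abs_inner_le x y : Cabs (hinner x y) <= norm x * norm y.
Proof.
  unfold Cabs, norm. rewrite <- sqrt_mult by apply hinner_pos.
  apply sqrt_le_1_alt, cauchy_schwarz.
Qed.

Lemma re_inner_le x y : Re (hinner x y) <= norm x * norm y.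
Proof.
  eapply Rle_trans; [|apply abs_inner_le]. unfold Cabs, Cabs2.
  destruct (Rle_dec (Re (hinner x y)) 0).
  - pose proof (sqrt_pos (Re (hinner x y) * Re (hinner x y) + Im (hinner x y) * Im (hinner x y))).
    lra.
  - rewrite <- (sqrt_square (Re (hinner x y))) at 1 by lra.
    apply sqrt_le_1_alt. nra.
Qed.

Lemma norm_triangle x y : norm (hadd x y) <= norm x + norm y.
Proof.
  pose proof (norm_ge0 x). pose proof (norm_ge0 y). pose proof (norm_ge0 (hadd x y)).
  apply Rsqr_incr_0_var; [|lra]. unfold Rsqr.
  rewrite norm_sq, hinner_add_l, !hinner_add_r. simpl.
  rewrite (hinner_conj x y). simpl. pose proof (re_inner_le x y).
  rewrite <- (norm_sq x), <- (norm_sq y). nra.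
Qed.

Lemma norm_scal a x : norm (hscal a x) = Cabs a * norm x.
Proof.
  unfold norm, Cabs. rewrite <- sqrt_mult by (apply Cabs2_ge0 || apply hinner_pos).
  f_equal. rewrite hinner_scal_l, hinner_scal_r.
  pose proof (hinner_self_im x). unfold Cabs2; simpl. nra.
Qed.

Lemma norm_opp x : norm (hopp x) = norm x.
Proof. rewrite hopp_scal, norm_scal, Cabs_m1. lra. Qed.

Lemma hsub0 x : hsub x hzero = x.
Proof. unfold hsub. rewrite hopp_scal, hscal_zero, hadd_0. reflexivity. Qed.

Lemma hsub_split x y z : hsub x z = hadd (hsub x y) (hsub y z).
Proof.
  unfold hsub. rewrite <- hadd_assoc, (hadd_assoc (hopp y)), (hadd_comm (hopp y) y),
    hadd_opp, hadd_0l. reflexivity.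
Qed.

Lemma hopp_add x y : hopp (hadd x y) = hadd (hopp x) (hopp y).
Proof. rewrite !hopp_scal. apply hscal_distr_v. Qed.

Lemma hopp_opp x : hopp (hopp x) = x.
Proof. rewrite !hopp_scal, hscal_assoc. rewrite <- (hscal_1 x) at 2. f_equal. cring. Qed.

Lemma hsub_hsub (a b c d : H) : hsub (hsub a c) (hsub b d) = hsub (hsub a b) (hsub c d).
Proof.
  unfold hsub. rewrite !hopp_add, !hopp_opp, <- !hadd_assoc. f_equal.
  rewrite !hadd_assoc. f_equal. apply hadd_comm.
Qed.

Lemma hscal_hsub l x y : hscal l (hsub x y) = hsub (hscal l x) (hscal l y).
Proof. unfold hsub. rewrite hscal_distr_v, !hopp_scal, !hscal_assoc. do 2 f_equal. cring. Qed.
Lemma norm_hsubC x y : norm (hsub x y) = norm (hsub y x).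
Proof.
  rewrite <- norm_opp. f_equal. unfold hsub. rewrite hopp_add, hopp_opp. apply hadd_comm.
Qed.

Lemma norm_sub_triangle x y z : norm (hsub x z) <= norm (hsub x y) + norm (hsub y z).
Proof. rewrite (hsub_split x y z). apply norm_triangle. Qed.

End HilbertSpace.

Ltac inner_expand :=
  repeat rewrite ?hinner_add_l, ?hinner_add_r, ?hinner_scal_l, ?hinner_scal_r,
    ?hinner_0l, ?hinner_0r.
Ltac inner_expand_in E :=
  repeat rewrite ?hinner_add_l, ?hinner_add_r, ?hinner_scal_l, ?hinner_scal_r,
    ?hinner_0l, ?hinner_0r in E.
(* Identities between vectors are checked by showing that the difference has zero inner
   product with itself, which [field] decides after expanding everything. *)
Ltac vec_eq :=
  apply hsub_eq0; apply hinner_def; unfold hsub; repeat rewrite hopp_scal; inner_expand;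
  unfold Cm1, C0, C1 in *; apply Ceq; simpl; field.

Lemma bound_nonneg {X : Type} (P : X -> Prop) (f g : X -> R) :
  (forall x, 0 <= g x) -> (exists M, forall x, P x -> f x <= M * g x) ->
  exists M, 0 <= M /\ forall x, P x -> f x <= M * g x.
Proof.
  intros g0 [M HM]. exists (Rmax M 0). split; [apply Rmax_r|]. intros x Px.
  eapply Rle_trans; [apply HM, Px|]. apply Rmult_le_compat_r; [apply g0 | apply Rmax_l].
Qed.

Lemma norm_hsub_le (H : Hilbert) (x y : H) : norm (hsub x y) <= norm x + norm y.
Proof. unfold hsub. rewrite <- (norm_opp H y). apply norm_triangle. Qed.

Lemma norm_le_hsub (H : Hilbert) (x y : H) : norm x <= norm (hsub x y) + norm y.
Proof. pose proof (norm_sub_triangle H x y hzero) as Tri. rewrite !hsub0 in Tri. exact Tri. Qed.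

Lemma dense_mono (H : Hilbert) (D E : H -> Prop) :
  (forall x, D x -> E x) -> dense D -> dense E.
Proof. intros DE Dd x eps eps0. destruct (Dd x eps eps0) as [y [Dy Hy]]. eauto. Qed.

Section LinearMap.
Variables H K : Hilbert.
Variable T : H -> K.
Hypothesis Tadd : forall x y, T (hadd x y) = hadd (T x) (T y).
Hypothesis Tscal : forall a x, T (hscal a x) = hscal a (T x).

Lemma lin_zero : T hzero = hzero.
Proof. rewrite <- (hscal_C0 H hzero), Tscal, hscal_C0. reflexivity. Qed.

Lemma lin_sub x y : T (hsub x y) = hsub (T x) (T y).
Proof. unfold hsub. rewrite Tadd, !hopp_scal, Tscal. reflexivity. Qed.

Lemma dense_image (D : H -> Prop) :
  (exists M, forall x, norm (T x) <= M * norm x) -> dense (range T) -> dense D ->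
  dense (image T D).
Proof.
  intros [M' HM'] Tdense Dd y eps eps0.
  destruct (bound_nonneg (fun _ => True) (fun x => norm (T x)) _ (norm_ge0 H)
    (ex_intro _ M' (fun x _ => HM' x))) as [M [M0 HM]].
  destruct (Tdense y (eps / 2)) as [y0 [[x0 ->] Hy0]]; [lra|].
  destruct (Dd x0 (eps / 2 / (M + 1))) as [x [Dx Hx]]; [apply Rdiv_lt_0_compat; lra|].
  exists (T x). split; [exists x; auto|].
  eapply Rle_lt_trans; [apply norm_sub_triangle with (y := T x0)|].
  rewrite <- lin_sub. pose proof (HM (hsub x0 x) I).
  assert (M * norm (hsub x0 x) <= M * (eps / 2 / (M + 1)))
    by (apply Rmult_le_compat_l; lra).
  assert (M * (eps / 2 / (M + 1)) < eps / 2).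
  { apply Rmult_lt_reg_r with (r := M + 1); [lra|].
    replace (M * (eps / 2 / (M + 1)) * (M + 1)) with (M * (eps / 2)) by (field; lra). nra. }
  lra.
Qed.

End LinearMap.

(** * Quasi-similarity and the spectrum *)

Section OperatorDomain.
Variables H K : Hilbert.
Variable A : Op H K.

Lemma dom_zero : dom A hzero.
Proof. destruct (dom_subspace _ _ A) as [P _]. exact P. Qed.

Lemma dom_add x y : dom A x -> dom A y -> dom A (hadd x y).
Proof. destruct (dom_subspace _ _ A) as [_ [P _]]. auto. Qed.

Lemma dom_scal a x : dom A x -> dom A (hscal a x).
Proof. destruct (dom_subspace _ _ A) as [_ [_ P]]. auto. Qed.

End OperatorDomain.

Section Shift.
Variable K : Hilbert.
Variable B : Op K K.

Lemma shift_eigen l y : app B y = hscal l y -> shift B l y = hzero.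
Proof. intro E. unfold shift. rewrite E. apply hadd_opp. Qed.

Lemma norm_shift_sub l z y :
  norm (hsub (shift B l z) (shift B l y))
  <= norm (hsub (app B z) (app B y)) + Cabs l * norm (hsub z y).
Proof.
  unfold shift. rewrite hsub_hsub, <- hscal_hsub, <- norm_scal. apply norm_hsub_le.
Qed.

(* The estimate [|y| <= C |(B - l) y|] extends from a core to the whole domain, because
   both sides are continuous for the graph norm. *)
Lemma bounded_below_from_core (D : K -> Prop) l C :
  core D B -> 0 <= C -> (forall z, D z -> norm z <= C * norm (shift B l z)) ->
  forall y, dom B y -> norm y <= C * norm (shift B l y).
Proof.
  intros [_ Dcore] C0 HD y Dy. apply Rle_plus_epsilon. intros eps eps0.
  pose proof (Cabs_ge0 l).
  set (k := 1 + C * (1 + Cabs l)).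
  assert (k0 : 0 < k) by (unfold k; nra).
  destruct (Dcore y Dy (eps / k)) as [z [Dz [Hz HBz]]]; [apply Rdiv_lt_0_compat; lra|].
  pose proof (norm_le_hsub K y z) as Ey. rewrite norm_hsubC in Ey.
  pose proof (HD z Dz) as Ez.
  pose proof (norm_le_hsub K (shift B l z) (shift B l y)) as Es.
  pose proof (norm_shift_sub l z y) as Ed.
  pose proof (norm_ge0 K (hsub z y)).
  assert (Cabs l * norm (hsub z y) <= Cabs l * (eps / k)) by (apply Rmult_le_compat_l; lra).
  assert (C * norm (shift B l z) <= C * (norm (shift B l y) + eps / k * (1 + Cabs l)))
    by (apply Rmult_le_compat_l; lra).
  replace eps with (eps / k * k) by (field; lra). unfold k at 2. nra.
Qed.

End Shift.

Section QuasiSimilarity.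
Variables H K : Hilbert.
Variables (A : Op H H) (B : Op K K) (T : H -> K).
Hypothesis hT : quasi_similar_via T A B.

Let Tadd : forall x y, T (hadd x y) = hadd (T x) (T y).
Proof. destruct hT as [[[? _] _] _]. auto. Qed.
Let Tscal : forall a x, T (hscal a x) = hscal a (T x).
Proof. destruct hT as [[[_ [? _]] _] _]. auto. Qed.
Let Tbound : exists M, forall x, norm (T x) <= M * norm x.
Proof. destruct hT as [[[_ [_ ?]] _] _]. auto. Qed.
Let Tinj : forall x y, T x = T y -> x = y.
Proof. destruct hT as [_ [? _]]. auto. Qed.
Let Tdense : dense (range T).
Proof. destruct hT as [_ [_ ?]]. auto. Qed.
Let Tint : forall x, dom A x -> dom B (T x) /\ app B (T x) = T (app A x).
Proof. destruct hT as [[_ ?] _]. auto. Qed.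

Lemma intertwining_shift l x : dom A x -> shift B l (T x) = T (shift A l x).
Proof.
  intro Dx. unfold shift. rewrite (lin_sub _ _ T Tadd Tscal), Tscal. f_equal. apply Tint, Dx.
Qed.

Lemma intertwining_eigenspace l x : eigenspace A l x -> eigenspace B l (T x).
Proof.
  intros [Dx Ex]. destruct (Tint x Dx) as [DTx E]. split; [exact DTx|].
  rewrite E, Ex, Tscal. reflexivity.
Qed.

Lemma point_spectrum_quasi_similar l : point_spectrum A l -> point_spectrum B l.
Proof.
  intros [x [Dx [NZ Ex]]]. destruct (intertwining_eigenspace l x (conj Dx Ex)) as [DTx ETx].
  exists (T x). repeat split; auto.
  intro Z. apply NZ, Tinj. rewrite Z, (lin_zero _ _ T Tscal). reflexivity.
Qed.

Lemma residual_spectrum_quasi_similar l : residual_spectrum B l -> residual_spectrum A l.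
Proof.
  intros [Binj Bnd]. split.
  - intros x y Dx Dy E. apply Tinj, Binj; try apply Tint; auto.
    rewrite !intertwining_shift by auto. rewrite E. reflexivity.
  - intro Adense. apply Bnd.
    apply (dense_mono _ (image T (fun y => exists x, dom A x /\ y = shift A l x))).
    + intros _ [_ [[x [Dx ->]] ->]]. exists (T x). split; [apply Tint, Dx|].
      rewrite intertwining_shift; auto.
    + apply dense_image; auto.
Qed.

Lemma point_spectrum_quasi_similar_onto l :
  (forall y, image T (dom A) y <-> dom B y) -> point_spectrum B l -> point_spectrum A l.
Proof.
  intros Him [y [Dy [NZ E]]]. destruct (proj2 (Him y) Dy) as [x [Dx ->]].
  exists x. repeat split; auto.
  - intros ->. apply NZ, (lin_zero _ _ T Tscal).
  - apply Tinj. rewrite Tscal, <- E. symmetry. apply Tint, Dx.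
Qed.

Lemma resolvent_bounded_below_on_image l :
  resolvent_set A l -> (exists M, forall x, norm x <= M * norm (T x)) ->
  exists C, 0 <= C /\ forall z, image T (dom A) z -> norm z <= C * norm (shift B l z).
Proof.
  intros [_ [_ HA]] [M2' HM2'].
  destruct (bound_nonneg (dom A) _ (fun x => norm (shift A l x))
    (fun x => norm_ge0 H _) HA) as [M1 [M10 HM1]].
  destruct (bound_nonneg (fun _ => True) (fun x => norm x) (fun x => norm (T x))
    (fun x => norm_ge0 K _) (ex_intro _ M2' (fun x _ => HM2' x))) as [M2 [M20 HM2]].
  destruct Tbound as [M3' HM3'].
  destruct (bound_nonneg (fun _ => True) (fun x => norm (T x)) _ (norm_ge0 H)
    (ex_intro _ M3' (fun x _ => HM3' x))) as [M3 [M30 HM3]].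
  exists (M3 * M1 * M2). split; [apply Rmult_le_pos; [apply Rmult_le_pos|]; auto|].
  intros _ [x [Dx ->]]. rewrite intertwining_shift by exact Dx.
  eapply Rle_trans; [apply HM3; exact I|]. rewrite !Rmult_assoc. apply Rmult_le_compat_l; auto.
  eapply Rle_trans; [apply HM1, Dx|]. apply Rmult_le_compat_l; auto.
Qed.

Lemma point_spectrum_in_spectrum l :
  (exists M, forall x, norm x <= M * norm (T x)) -> core (image T (dom A)) B ->
  point_spectrum B l -> spectrum A l.
Proof.
  intros HTinv Hcore [y [Dy [NZ E]]] Hres.
  destruct (resolvent_bounded_below_on_image l Hres HTinv) as [C [C0 HC]].
  pose proof (bounded_below_from_core K B _ l C Hcore C0 HC y Dy) as Hy.
  rewrite shift_eigen, norm_zero, Rmult_0_r in Hy by exact E.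
  apply NZ, norm_eq0. pose proof (norm_ge0 K y). lra.
Qed.

End QuasiSimilarity.

(** * Orthonormal bases *)

Lemma zorn_sets (T : Type) (P : (T -> Prop) -> Prop) :
  (forall F : (T -> Prop) -> Prop, (forall X, F X -> P X) ->
     (forall X Y, F X -> F Y -> (forall t, X t -> Y t) \/ (forall t, Y t -> X t)) ->
     P (fun t => exists2 X, F X & X t)) ->
  exists M, P M /\ forall N, (forall t, M t -> N t) -> P N -> forall t, N t -> M t.
Proof.
  intro Hchain. destruct (@classical_sets.Zorn_bigcup T P Hchain) as [M [PM Mmax]].
  exists M. split; [exact PM|]. intros N MN PN t Nt.
  apply NNPP. intro nMt. apply (Mmax N); [split; [exact MN|] | exact PN].
  intro NM. exact (nMt (NM t Nt)).
Qed.

Lemma inf_approx {X : Type} (P : X -> Prop) (f : X -> R) :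
  (exists x, P x) -> (forall x, 0 <= f x) ->
  exists d, 0 <= d /\ (forall x, P x -> d <= f x) /\
    forall delta, delta > 0 -> exists x, P x /\ f x < d + delta.
Proof.
  intros [x0 Px0] f0.
  set (E := fun r => exists x, P x /\ r = - f x).
  destruct (completeness E) as [m [Mub Mlub]].
  - exists 0. intros r [x [_ ->]]. pose proof (f0 x). lra.
  - exists (- f x0). exists x0. auto.
  - exists (- m).
    assert (Hle : forall x, P x -> - m <= f x).
    { intros x Px. assert (E (- f x)) as Ex by (exists x; auto). apply Mub in Ex. lra. }
    split; [|split; [exact Hle|]].
    + pose proof (Hle x0 Px0).
      assert (m <= 0) by (apply Mlub; intros r [x [_ ->]]; pose proof (f0 x); lra).
      lra.
    + intros delta delta0. apply NNPP. intro Hn.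
      assert (m <= m - delta); [|lra].
      apply Mlub. intros r [x [Px ->]]. apply Rnot_lt_le. intro L.
      apply Hn. exists x. split; auto. lra.
Qed.

Definition closed_set {H : Hilbert} (V : H -> Prop) :=
  forall u x, (forall n, V (u n)) -> converges u x -> V x.

Definition cauchy {H : Hilbert} (u : nat -> H) :=
  forall eps, eps > 0 -> exists N, forall m n, (N <= m)%nat -> (N <= n)%nat ->
    norm (hsub (u m) (u n)) < eps.

Section Approximation.
Variable H : Hilbert.
Implicit Types x y z w : H.

Lemma cauchy_converges (u : nat -> H) : cauchy u -> exists l, converges u l.
Proof. exact (hcomplete H u). Qed.

Lemma span_in (V S : H -> Prop) :
  subspace V -> (forall x, S x -> V x) -> forall y, span S y -> V y.
Proof. intros [Z [Ad Sc]] SV y Sp. induction Sp; auto. Qed.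

Lemma orth_span (S : H -> Prop) w :
  (forall s, S s -> hinner w s = C0) -> forall y, span S y -> hinner w y = C0.
Proof.
  intros O y Sp. induction Sp.
  - apply hinner_0r.
  - auto.
  - rewrite hinner_add_r, IHSp1, IHSp2. cring.
  - rewrite hinner_scal_r, IHSp. cring.
Qed.

Lemma orthogonal_total_zero (S : H -> Prop) w :
  (forall s, S s -> hinner w s = C0) ->
  (forall eps, eps > 0 -> exists y, span S y /\ norm (hsub w y) < eps) -> w = hzero.
Proof.
  intros O D. apply norm_eq0. apply Rle_antisym; [|apply norm_ge0].
  apply Rle_plus_epsilon. intros eps eps0. rewrite Rplus_0_l.
  destruct (D eps eps0) as [y [Sy Hy]].
  assert (E : hinner w w = hinner w (hsub w y)).
  { unfold hsub. rewrite hinner_add_r, hopp_scal, hinner_scal_r, (orth_span S w O y Sy). cring. }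
  pose proof (re_inner_le H w (hsub w y)) as C. rewrite <- E, <- norm_sq in C.
  pose proof (norm_ge0 H w).
  destruct (Req_dec (norm w) 0) as [Z|NZ]; [lra|]. nra.
Qed.

Definition midpoint y y' : H := hscal (mkC (/ 2) 0) (hadd y y').

Lemma parallelogram x y y' :
  norm (hsub y y') * norm (hsub y y')
  + 4 * (norm (hsub x (midpoint y y')) * norm (hsub x (midpoint y y')))
  = 2 * (norm (hsub x y) * norm (hsub x y)) + 2 * (norm (hsub x y') * norm (hsub x y')).
Proof.
  rewrite !norm_sq. unfold midpoint, hsub. rewrite !hopp_scal. inner_expand.
  unfold Cm1. simpl. field.
Qed.

(* A sequence in a midpoint-convex set that minimises the distance to [x] is Cauchy:
   by the parallelogram law [|y - y'|^2 <= 2 |x - y|^2 + 2 |x - y'|^2 - 4 d^2]. *)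
Lemma minimizing_sequence_cauchy (C : H -> Prop) x d (u : nat -> H) :
  (forall y y', C y -> C y' -> C (midpoint y y')) -> 0 <= d ->
  (forall y, C y -> d <= norm (hsub x y)) ->
  (forall n, C (u n) /\ norm (hsub x (u n)) < d + / (INR n + 1)) -> cauchy u.
Proof.
  intros Cmid d0 dle Hu e e0.
  destruct (archimed_cor1 (e * e / (4 * (2 * d + 1)))) as [N [HN HN0]].
  { apply Rdiv_lt_0_compat; nra. }
  exists N. intros p q Hp Hq.
  assert (iN0 : 0 < / INR N) by (apply Rinv_0_lt_compat, lt_0_INR; lia).
  assert (iN1 : / INR N <= 1).
  { rewrite <- Rinv_1. apply Rinv_le_contravar; [lra|]. apply (le_INR 1). lia. }
  assert (close : forall n, (N <= n)%nat ->
            norm (hsub x (u n)) * norm (hsub x (u n)) - d * d <= (2 * d + 1) * / INR N).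
  { intros n Hn. destruct (Hu n) as [_ Hn'].
    assert (/ (INR n + 1) <= / INR N).
    { apply Rinv_le_contravar; [apply lt_0_INR; lia|]. apply le_INR in Hn. lra. }
    pose proof (dle _ (proj1 (Hu n))). nra. }
  pose proof (parallelogram x (u p) (u q)) as Par.
  pose proof (dle _ (Cmid _ _ (proj1 (Hu p)) (proj1 (Hu q)))).
  pose proof (close p Hp). pose proof (close q Hq).
  assert ((2 * d + 1) * / INR N < e * e / 4).
  { apply Rlt_le_trans with ((2 * d + 1) * (e * e / (4 * (2 * d + 1)))).
    - apply Rmult_lt_compat_l; lra.
    - right. field. lra. }
  pose proof (norm_ge0 H (hsub (u p) (u q))). nra.
Qed.

Lemma best_approximation (V S : H -> Prop) x :
  subspace V -> closed_set V -> (forall s, S s -> V s) ->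
  exists z, V z /\ (forall eps, eps > 0 -> exists y, span S y /\ norm (hsub z y) < eps) /\
    forall v, span S v -> norm (hsub x z) <= norm (hsub (hsub x z) v).
Proof.
  intros Sub Cl SV.
  destruct (inf_approx (span S) (fun y => norm (hsub x y)) (ex_intro _ hzero (span_zero S))
    (fun y => norm_ge0 H _)) as [d [d0 [dle dclose]]].
  destruct (choice (fun n y => span S y /\ norm (hsub x y) < d + / (INR n + 1))) as [u Hu].
  { intro n. apply dclose, Rinv_0_lt_compat. pose proof (pos_INR n). lra. }
  assert (Hmid : forall y y', span S y -> span S y' -> span S (midpoint y y')).
  { intros. apply span_scal, span_add; auto. }
  destruct (cauchy_converges u (minimizing_sequence_cauchy _ x d u Hmid d0 dle Hu)) as [z Hz].
  exists z. split; [|split].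
  - apply (Cl u z); auto. intro n. apply (span_in V S Sub SV), Hu.
  - intros eps eps0. destruct (Hz eps eps0) as [N HN]. exists (u N).
    rewrite norm_hsubC. split; [apply Hu | apply HN; lia].
  - intros v Sv. apply Rle_trans with d; apply Rle_plus_epsilon; intros eps eps0.
    + destruct (Hz (eps / 2)) as [N1 HN1]; [lra|].
      destruct (archimed_cor1 (eps / 2)) as [N2 [HN2 HN2']]; [lra|].
      set (n := max N1 N2). pose proof (HN1 n (Nat.le_max_l _ _)).
      destruct (Hu n) as [_ Hn].
      assert (/ (INR n + 1) < eps / 2).
      { eapply Rle_lt_trans; [|exact HN2]. apply Rinv_le_contravar; [apply lt_0_INR; lia|].
        pose proof (le_INR _ _ (Nat.le_max_r N1 N2)) as Hn2. fold n in Hn2. lra. }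
      pose proof (norm_sub_triangle H x (u n) z). lra.
    + destruct (Hz eps eps0) as [N HN]. pose proof (HN N (le_n _)).
      pose proof (dle _ (span_add _ _ _ (proj1 (Hu N)) Sv)).
      replace (hsub x (hadd (u N) v)) with (hadd (hsub (hsub x z) v) (hsub z (u N))) in * by vec_eq.
      pose proof (norm_triangle H (hsub (hsub x z) v) (hsub z (u N))).
      rewrite (norm_hsubC H z) in *. lra.
Qed.

Lemma orthogonal_of_minimal w s :
  hinner s s = C1 -> norm w <= norm (hsub w (hscal (hinner w s) s)) -> hinner w s = C0.
Proof.
  intros Es Hmin. set (c := hinner w s).
  pose proof (norm_ge0 H w).
  assert (Hsq : norm w * norm w <= norm (hsub w (hscal c s)) * norm (hsub w (hscal c s)))
    by (apply Rmult_le_compat; auto).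
  rewrite !norm_sq in Hsq. unfold hsub in Hsq. rewrite hopp_scal in Hsq. inner_expand_in Hsq.
  rewrite Es, (hinner_conj w s) in Hsq. fold c in Hsq. unfold Cm1, C1 in Hsq. simpl in Hsq.
  apply Ceq; simpl; nra.
Qed.

Lemma normalize_unit w :
  w <> hzero -> hinner (hscal (mkC (/ norm w) 0) w) (hscal (mkC (/ norm w) 0) w) = C1.
Proof.
  intro NZ. assert (norm w <> 0) by (intro E; apply NZ, norm_eq0, E).
  inner_expand. pose proof (norm_sq H w) as Sq. pose proof (hinner_self_im H w) as Im0.
  apply Ceq; simpl.
  - rewrite <- Sq. field. exact H0.
  - rewrite Im0. lra.
Qed.

(* A maximal orthonormal family of a closed subspace is total: otherwise the residual of a
   best approximation is a nonzero vector orthogonal to the family. *)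
Lemma maximal_orthonormal_total (V S : H -> Prop) :
  subspace V -> closed_set V -> (forall x, S x -> V x) -> (forall s, S s -> hinner s s = C1) ->
  (forall w, V w -> hinner w w = C1 -> (forall s, S s -> hinner w s = C0) -> False) ->
  forall x, V x -> forall eps, eps > 0 -> exists y, span S y /\ norm (hsub x y) < eps.
Proof.
  intros Sub Cl SV S1 Smax x Vx.
  destruct (best_approximation V S x Sub Cl SV) as [z [Vz [Hz Hmin]]].
  destruct (classic (hsub x z = hzero)) as [E|NZ].
  - apply hsub_eq0 in E. subst. exact Hz.
  - exfalso. set (w := hsub x z) in *.
    assert (Vw : V w) by (destruct Sub as [_ [Ad Sc]]; unfold w, hsub; rewrite hopp_scal; auto).
    assert (Worth : forall s, S s -> hinner w s = C0).
    { intros s Ss. apply orthogonal_of_minimal; auto.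
      apply Hmin, span_scal, span_gen, Ss. }
    apply (Smax (hscal (mkC (/ norm w) 0) w)).
    + destruct Sub as [_ [_ Sc]]. auto.
    + apply normalize_unit, NZ.
    + intros s Ss. rewrite hinner_scal_l, Worth by exact Ss. cring.
Qed.

End Approximation.

Lemma orthonormal_basis_exists (H : Hilbert) (V : H -> Prop) :
  subspace V -> closed_set V -> exists S, orthonormal_basis V S.
Proof.
  intros Sub Cl.
  destruct (zorn_sets H (fun S => (forall x, S x -> V x) /\ orthonormal S))
    as [S [[SV [S1 S2]] Smax]].
  { intros F FP Ftot. split; [|split].
    - intros x [X FX Xx]. apply (FP X FX), Xx.
    - intros x [X FX Xx]. apply (FP X FX), Xx.
    - intros x y [X FX Xx] [Y FY Yy] Nxy. destruct (Ftot X Y FX FY) as [XY|YX].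
      + apply (FP Y FY); auto.
      + apply (FP X FX); auto. }
  exists S. split; [exact SV|split; [split; auto|]].
  apply maximal_orthonormal_total; auto.
  intros w Vw W1 Worth.
  assert (Sw : S w).
  { apply (Smax (fun x => S x \/ x = w)); auto.
    split; [|split].
    - intros x [Sx| ->]; auto.
    - intros x [Sx| ->]; auto.
    - intros x y [Sx| ->] [Sy| ->] Nxy; auto.
      + rewrite hinner_conj, Worth by exact Sx. cring.
      + congruence. }
  apply C1_neq_C0. rewrite <- W1. apply Worth, Sw.
Qed.

(** * Comparing cardinalities *)

Definition card_le {X Y : Type} (A : X -> Prop) (B : Y -> Prop) :=
  exists f : X -> Y, (forall x, A x -> B (f x)) /\ (forall x y, A x -> A y -> f x = f y -> x = y).

Definition listing {X : Type} (A : X -> Prop) (l : list X) := NoDup l /\ forall x, A x <-> In x l.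

Definition dedekind_infinite {X : Type} (A : X -> Prop) :=
  exists h : nat -> X, (forall i, A (h i)) /\ forall i j, h i = h j -> i = j.

Lemma card_le_trans {X Y Z : Type} (A : X -> Prop) (B : Y -> Prop) (C : Z -> Prop) :
  card_le A B -> card_le B C -> card_le A C.
Proof. intros [f [f1 f2]] [g [g1 g2]]. exists (fun x => g (f x)). split; auto. Qed.

Section FiniteSets.
Variable X : Type.
Variable x0 : X.

(* Collect elements of [A] outside a growing list; if this never stops, the elements
   collected form an injective sequence. *)
Lemma finite_or_dedekind_infinite (A : X -> Prop) : (exists l, listing A l) \/ dedekind_infinite A.
Proof.
  destruct (classic (exists l, forall x, A x <-> In x l)) as [[l Hl]|NF].
  - left. exists (nodup (fun x y => excluded_middle_informative (x = y)) l).
    split; [apply NoDup_nodup|]. intro x. rewrite nodup_In. apply Hl.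
  - right.
    assert (Step : forall l, exists x, (forall y, In y l -> A y) -> A x /\ ~ In x l).
    { intro l. destruct (classic (exists x, A x /\ ~ In x l)) as [[x Hx]|Hx].
      - exists x; auto.
      - exists x0. intro Hl. exfalso. apply NF. exists l. intro x. split; [|auto].
        intro Ax. apply NNPP. intro N. apply Hx. eauto. }
    destruct (choice _ Step) as [pick Hpick].
    set (sq := fix sq n := match n with O => [] | S k => sq k ++ [pick (sq k)] end).
    assert (SA : forall n y, In y (sq n) -> A y).
    { induction n; simpl; intros y Hy; [contradiction|].
      apply in_app_or in Hy as [Hy|[<-|[]]]; auto. apply Hpick, IHn. }
    assert (Sin : forall i n, (i < n)%nat -> In (pick (sq i)) (sq n)).
    { intros i n. induction n; intro Hi; [lia|]. simpl. apply in_or_app.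
      destruct (Nat.eq_dec i n) as [->|]; [right; left; reflexivity | left; apply IHn; lia]. }
    exists (fun n => pick (sq n)). split; [intro i; apply Hpick, SA|].
    intros i j E. destruct (Nat.lt_trichotomy i j) as [L|[L|L]]; auto; exfalso.
    + apply (proj2 (Hpick (sq j) (SA j))). rewrite <- E. apply Sin, L.
    + apply (proj2 (Hpick (sq i) (SA i))). rewrite E. apply Sin, L.
Qed.

Lemma listing_index (A : X -> Prop) l : listing A l ->
  exists idx : X -> nat, forall x, A x -> (idx x < length l)%nat /\ nth (idx x) l x0 = x.
Proof.
  intros [_ Hl]. apply (choice (fun x i => A x -> (i < length l)%nat /\ nth i l x0 = x)).
  intro x. destruct (classic (A x)) as [Ax|Ax].
  - apply Hl, In_nth with (d := x0) in Ax. destruct Ax as [i [Hi E]]. exists i. auto.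
  - exists O. intro; contradiction.
Qed.

Lemma card_le_nat_of_finite_cover (A : X -> Prop) (F : nat -> X -> Prop) :
  (forall k, exists l, listing (F k) l) -> (forall x, A x -> exists k, F k x) ->
  card_le A (fun _ : nat => True).
Proof.
  intros Fin Cov.
  destruct (choice _ Fin) as [L HL].
  destruct (choice (fun k idx => forall x, F k x -> nth (idx x) (L k) x0 = x)) as [idx Hidx].
  { intro k. destruct (listing_index _ _ (HL k)) as [idx Hi]. exists idx. apply Hi. }
  destruct (choice (fun x k => A x -> F k x)) as [kf Hkf].
  { intro x. destruct (classic (A x)) as [Ax|Ax].
    - destruct (Cov x Ax) as [k Hk]. exists k; auto.
    - exists O; intro; contradiction. }
  exists (fun x => to_nat (kf x, idx (kf x) x)). split; auto.
  intros x y Ax Ay E. apply to_nat_inj in E. injection E as E1 E2.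
  rewrite <- (Hidx (kf x) x (Hkf x Ax)), <- (Hidx (kf y) y (Hkf y Ay)), E2, E1. reflexivity.
Qed.

End FiniteSets.

Section ProductWithNat.
Local Opaque to_nat.
Variable X : Type.
Variable A : X -> Prop.

(* [G] is the graph of an injective map [D x nat -> D] for a subset [D] of [A]; the domain [D]
   is read off the pairs [(x, 0)]. *)
Definition pairing_dom (G : (X * nat) * X -> Prop) x := exists y, G ((x, O), y).

Definition self_pairing (G : (X * nat) * X -> Prop) :=
  (forall x n y, G ((x, n), y) -> A x /\ pairing_dom G y /\ pairing_dom G x) /\
  (forall p y y', G (p, y) -> G (p, y') -> y = y') /\
  (forall p p' y, G (p, y) -> G (p', y) -> p = p') /\
  (forall x n, pairing_dom G x -> exists y, G ((x, n), y)).

Lemma self_pairing_chain (F : ((X * nat) * X -> Prop) -> Prop) :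
  (forall G, F G -> self_pairing G) ->
  (forall G G', F G -> F G' -> (forall t, G t -> G' t) \/ (forall t, G' t -> G t)) ->
  self_pairing (fun t => exists2 G, F G & G t).
Proof.
  intros FP Ftot. split; [|split; [|split]].
  - intros x n y [G FG Gt]. destruct (proj1 (FP G FG) x n y Gt) as [Ax [[z Dy] [z' Dx]]].
    split; [exact Ax|]. split; [exists z | exists z']; eauto.
  - intros p y y' [G FG Gt] [G' FG' Gt']. destruct (Ftot G G' FG FG') as [GG'|G'G].
    + apply (proj1 (proj2 (FP G' FG')) p); auto.
    + apply (proj1 (proj2 (FP G FG)) p); auto.
  - intros p p' y [G FG Gt] [G' FG' Gt']. destruct (Ftot G G' FG FG') as [GG'|G'G].
    + apply (proj1 (proj2 (proj2 (FP G' FG'))) p p' y); auto.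
    + apply (proj1 (proj2 (proj2 (FP G FG))) p p' y); auto.
  - intros x n [y [G FG Gt]]. destruct (proj2 (proj2 (proj2 (FP G FG))) x n (ex_intro _ y Gt))
      as [y' Hy']. exists y'. eauto.
Qed.

(* An injective sequence [k] outside the domain is absorbed by sending [(k i, n)] to
   [k (to_nat (i, n))]. *)
Lemma self_pairing_extend (G : (X * nat) * X -> Prop) (k : nat -> X) :
  self_pairing G -> (forall i, A (k i) /\ ~ pairing_dom G (k i)) ->
  (forall i j, k i = k j -> i = j) ->
  self_pairing (fun t => G t \/ exists i n, t = ((k i, n), k (to_nat (i, n)))).
Proof.
  intros [G1 [G2 [G3 G4]]] kA kI.
  set (G' := fun t => G t \/ exists i n, t = ((k i, n), k (to_nat (i, n)))).
  assert (Dk : forall i, pairing_dom G' (k i)).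
  { intro i. exists (k (to_nat (i, O))). right. exists i, O. reflexivity. }
  assert (DG : forall x, pairing_dom G x -> pairing_dom G' x).
  { intros x [y Hy]. exists y. left. exact Hy. }
  split; [|split; [|split]].
  - intros x n y [Gt|[i [n' E]]].
    + destruct (G1 _ _ _ Gt) as [Ax [Dy Dx]]. auto.
    + injection E as -> -> ->. split; [apply kA | split; apply Dk].
  - intros [x m] y y' [Gt|[i [n E]]] [Gt'|[i' [n' E']]];
      try (injection E as ? ?); try (injection E' as ? ?); subst.
    + eauto.
    + exfalso. apply (kA i'). apply (G1 _ _ _ Gt).
    + exfalso. apply (kA i). apply (G1 _ _ _ Gt').
    + match goal with Hk : k ?a = k ?b |- _ => apply kI in Hk; subst; reflexivity end.
  - intros [x m] [x' m'] y [Gt|[i [n E]]] [Gt'|[i' [n' E']]];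
      try (injection E as ? ?); try (injection E' as ? ?); subst.
    + eauto.
    + exfalso. apply (kA (to_nat (i', n'))). apply (G1 _ _ _ Gt).
    + exfalso. apply (kA (to_nat (i, n))). apply (G1 _ _ _ Gt').
    + match goal with Hk : k (to_nat _) = k (to_nat _) |- _ =>
        apply kI, to_nat_inj in Hk; injection Hk as -> ->; reflexivity end.
  - intros x n [y [Gt|[i [n' E]]]].
    + destruct (G4 x n (ex_intro _ y Gt)) as [y' Hy']. exists y'. left. exact Hy'.
    + injection E as -> _ _. exists (k (to_nat (i, n))). right. exists i, n. reflexivity.
Qed.

(* A maximal self-pairing leaves only finitely many elements of [A] outside its domain [D].
   Elements of [D] use the even second coordinates, the finitely many others are sent,
   through an index [idx] into the list of them, to odd second coordinates over a fixed
   [x0] in [D]. *)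
Lemma card_prod_nat_le : dedekind_infinite A -> card_le (fun p : X * nat => A (fst p)) A.
Proof.
  intros [h [hA hI]].
  destruct (zorn_sets _ self_pairing self_pairing_chain) as [G [HG Gmax]].
  pose proof HG as [G1 [_ [G3 G4]]].
  set (D := pairing_dom G).
  assert (NoSeq : ~ dedekind_infinite (fun x => A x /\ ~ D x)).
  { intros [k [kA kI]].
    pose proof (Gmax _ (fun t Gt => or_introl Gt) (self_pairing_extend G k HG kA kI)
      ((k O, O), k (to_nat (O, O))) (or_intror (ex_intro _ O (ex_intro _ O eq_refl)))) as Gk.
    apply (kA O). exists (k (to_nat (O, O))). exact Gk. }
  destruct (finite_or_dedekind_infinite X (h O) (fun x => A x /\ ~ D x)) as [[lB FB]|NI];
    [|contradiction].
  assert (D0 : exists x0, D x0).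
  { apply NNPP. intro N. apply NoSeq. exists h. split; auto. intro i. split; auto. eauto. }
  destruct D0 as [x0 Dx0].
  destruct (listing_index X x0 _ _ FB) as [idx Hidx].
  destruct (choice (fun p y => D (fst p) -> G (p, y))) as [g Hg].
  { intros [x n]. destruct (classic (D x)) as [Dx|Dx].
    - destruct (G4 x n Dx) as [y Hy]. exists y. auto.
    - exists x0. simpl. intro; contradiction. }
  assert (gA : forall p, D (fst p) -> A (g p)).
  { intros [x n] Dx. destruct (G1 _ _ _ (Hg _ Dx)) as [_ [[z Hz] _]]. apply (G1 _ _ _ Hz). }
  assert (ginj : forall p p', D (fst p) -> D (fst p') -> g p = g p' -> p = p').
  { intros p p' Dp Dp' E. apply (G3 p p' (g p)); [apply Hg, Dp | rewrite E; apply Hg, Dp']. }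
  exists (fun p => if excluded_middle_informative (D (fst p)) then g (fst p, 2 * snd p)%nat
            else g (x0, S (2 * to_nat (idx (fst p), snd p)))).
  split.
  - intros [x n] Ax. simpl. destruct (excluded_middle_informative (D x)); apply gA; auto.
  - intros [x n] [x' n'] Ax Ax'. cbn [fst snd] in *.
    destruct (excluded_middle_informative (D x)) as [Dx|Dx];
    destruct (excluded_middle_informative (D x')) as [Dx'|Dx']; intro E;
    apply ginj in E; auto.
    + injection E as -> En. f_equal. lia.
    + injection E as _ En. lia.
    + injection E as _ En. lia.
    + injection E as En. assert (E3 : to_nat (idx x, n) = to_nat (idx x', n')) by lia.
      apply to_nat_inj in E3. injection E3 as E3 ->.
      rewrite <- (proj2 (Hidx x (conj Ax Dx))), <- (proj2 (Hidx x' (conj Ax' Dx'))), E3.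
      reflexivity.
Qed.

End ProductWithNat.

(** * Finite sums, Bessel's inequality and linear systems *)

Fixpoint csum (f : nat -> Cplx) (n : nat) : Cplx :=
  match n with O => C0 | S k => Cadd (csum f k) (f k) end.
Fixpoint rsum (f : nat -> R) (n : nat) : R :=
  match n with O => 0 | S k => rsum f k + f k end.
Fixpoint vsum {H : Hilbert} (c : nat -> Cplx) (v : nat -> H) (n : nat) : H :=
  match n with O => hzero | S k => hadd (vsum c v k) (hscal (c k) (v k)) end.

Definition orthofam {H : Hilbert} (e : nat -> H) (m : nat) :=
  forall i j, (i < m)%nat -> (j < m)%nat ->
    hinner (e i) (e j) = if Nat.eq_dec i j then C1 else C0.

Lemma rsum_ge (f : nat -> R) d n : (forall i, (i < n)%nat -> d <= f i) -> INR n * d <= rsum f n.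
Proof.
  induction n; intros Hf; [simpl; lra|]. cbn [rsum]. rewrite S_INR.
  specialize (IHn (fun i Hi => Hf i ltac:(lia))). specialize (Hf n ltac:(lia)). lra.
Qed.

Lemma rsum_ext (f g : nat -> R) n : (forall i, f i = g i) -> rsum f n = rsum g n.
Proof. intro E. induction n; simpl; auto. rewrite IHn, E. reflexivity. Qed.

Lemma rsum_nonneg (f : nat -> R) n : (forall i, 0 <= f i) -> 0 <= rsum f n.
Proof. intro P. induction n; simpl; [lra|]. specialize (P n). lra. Qed.

Lemma csum_ext (f g : nat -> Cplx) m : (forall i, (i < m)%nat -> f i = g i) -> csum f m = csum g m.
Proof.
  induction m; intros E; simpl; auto. rewrite IHm by (intros; apply E; lia). rewrite E by lia.
  reflexivity.
Qed.

Lemma csum_zero (f : nat -> Cplx) m : (forall i, (i < m)%nat -> f i = C0) -> csum f m = C0.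
Proof.
  induction m; intros E; simpl; auto. rewrite IHm by (intros; apply E; lia). rewrite E by lia.
  cring.
Qed.

Lemma csum_add_mul (f g : nat -> Cplx) c m :
  csum (fun i => Cadd (f i) (Cmul (g i) c)) m = Cadd (csum f m) (Cmul (csum g m) c).
Proof. induction m; simpl; [cring|]. rewrite IHm. cring. Qed.

Lemma csum_conj_mul (f : nat -> Cplx) n :
  csum (fun i => Cmul (Cconj (f i)) (f i)) n = mkC (rsum (fun i => Cabs2 (f i)) n) 0.
Proof. induction n; simpl; [reflexivity|]. rewrite IHn. unfold Cabs2. cring. Qed.

Section FiniteSums.
Variable H : Hilbert.

Lemma inner_vsum_l c (v : nat -> H) n w :
  hinner (vsum c v n) w = csum (fun i => Cmul (c i) (hinner (v i) w)) n.
Proof.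
  induction n; simpl; [apply hinner_0l|]. rewrite hinner_add_l, hinner_scal_l, IHn. reflexivity.
Qed.

Lemma vsum_in (V : H -> Prop) c v n :
  subspace V -> (forall i, (i < n)%nat -> V (v i)) -> V (vsum c v n).
Proof. intros [Z [Ad Sc]]. induction n; simpl; intros; auto. apply Ad; auto. Qed.

Lemma inner_vsum_orthofam c (e : nat -> H) m n j : orthofam e m -> (n <= m)%nat -> (j < m)%nat ->
  hinner (vsum c e n) (e j) = if Nat.ltb j n then c j else C0.
Proof.
  intros O. induction n; intros Hn Hj; simpl; [apply hinner_0l|].
  rewrite hinner_add_l, hinner_scal_l, IHn, O by lia.
  destruct (Nat.eq_dec n j); destruct (Nat.ltb_spec j n); destruct (Nat.ltb_spec j (S n));
    try lia; subst; cring.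
Qed.

Lemma norm_vsum_orthofam c (e : nat -> H) m n : orthofam e m -> (n <= m)%nat ->
  Re (hinner (vsum c e n) (vsum c e n)) = rsum (fun i => Cabs2 (c i)) n.
Proof.
  intros O. induction n; intros Hn; simpl; [rewrite hinner_0l; reflexivity|].
  rewrite inner_expand, IHn, (hinner_conj (vsum c e n) (e n)) by lia.
  rewrite inner_vsum_orthofam with (m := m), Nat.ltb_irrefl, O by (auto; lia).
  destruct (Nat.eq_dec n n); [|lia]. simpl. ring.
Qed.

End FiniteSums.

Lemma lin_vsum {H K : Hilbert} (T : H -> K) c v n :
  (forall x y, T (hadd x y) = hadd (T x) (T y)) -> (forall a x, T (hscal a x) = hscal a (T x)) ->
  T (vsum c v n) = vsum c (fun i => T (v i)) n.
Proof. intros A L. induction n; simpl; [apply lin_zero; auto|]. rewrite A, L, IHn. reflexivity. Qed.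

(* Bessel's inequality for the bounded functional [x |-> <T x, b>], tested on the vector
   [sum_i conj <T e_i, b> e_i]. *)
Lemma bessel_bounded_functional {H K : Hilbert} (T : H -> K) (M : R) (b : K) (e : nat -> H) m :
  (forall x y, T (hadd x y) = hadd (T x) (T y)) -> (forall a x, T (hscal a x) = hscal a (T x)) ->
  (forall x, norm (T x) <= M * norm x) -> orthofam e m ->
  rsum (fun i => Cabs2 (hinner (T (e i)) b)) m <= (M * norm b) * (M * norm b).
Proof.
  intros Tadd Tscal HM O.
  set (x := vsum (fun i => Cconj (hinner (T (e i)) b)) e m).
  set (S := rsum (fun i => Cabs2 (hinner (T (e i)) b)) m).
  assert (E1 : hinner (T x) b = mkC S 0).
  { unfold x. rewrite lin_vsum, inner_vsum_l by auto. apply csum_conj_mul. }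
  assert (E2 : norm x * norm x = S).
  { rewrite norm_sq. unfold x. rewrite norm_vsum_orthofam with (m := m) by (auto; lia).
    unfold S. apply rsum_ext. intro i. unfold Cabs2. simpl. ring. }
  assert (S0 : 0 <= S) by (apply rsum_nonneg; intro; apply Cabs2_ge0).
  pose proof (abs_inner_le _ (T x) b) as C. rewrite E1 in C.
  replace (Cabs (mkC S 0)) with S in C
    by (unfold Cabs, Cabs2; simpl; replace (S * S + 0 * 0) with (S * S) by ring;
        symmetry; apply sqrt_square, S0).
  pose proof (HM x). pose proof (norm_ge0 _ b). pose proof (norm_ge0 _ x).
  pose proof (norm_ge0 _ (T x)).
  assert (S <= M * norm x * norm b) by nra.
  destruct (Req_dec (norm x) 0) as [Z|NZ]; [rewrite Z in E2; nra|].
  assert (norm x <= M * norm b) by nra. nra.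
Qed.

Definition skip (i0 i : nat) := if Nat.ltb i i0 then i else S i.

Lemma csum_skip (f : nat -> Cplx) m i0 : (i0 <= m)%nat ->
  csum f (S m) = Cadd (csum (fun i => f (skip i0 i)) m) (f i0).
Proof.
  revert i0. induction m; intros i0 Hi.
  - assert (i0 = O) as -> by lia. reflexivity.
  - change (csum f (S (S m))) with (Cadd (csum f (S m)) (f (S m))).
    destruct (Nat.eq_dec i0 (S m)) as [->|Ne].
    + f_equal. apply csum_ext. intros i Hi'. unfold skip.
      destruct (Nat.ltb_spec i (S m)); [reflexivity|lia].
    + rewrite (IHm i0) by lia. simpl.
      replace (skip i0 m) with (S m)
        by (unfold skip; destruct (Nat.ltb_spec m i0); [lia|reflexivity]).
      cring.
Qed.

Definition Cinv (a : Cplx) := mkC (Re a / Cabs2 a) (- Im a / Cabs2 a).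

Lemma Cmul_inv a : a <> C0 -> Cmul a (Cinv a) = C1.
Proof.
  intro N. pose proof (Cabs2_pos a N) as P. unfold Cinv, Cabs2 in *.
  apply Ceq; simpl; field; lra.
Qed.

(* Unknown [i] of a linear system is [a i], its equation [j] reads [sum_i a i * M i j = 0]. *)
Definition nontrivial_solution (M : nat -> nat -> Cplx) (m n : nat) (a : nat -> Cplx) :=
  (exists i, (i < m)%nat /\ a i <> C0) /\
  forall j, (j < n)%nat -> csum (fun i => Cmul (a i) (M i j)) m = C0.

(* Eliminating unknown [i0] with the pivot [M i0 n] of equation [n]. *)
Definition eliminate (M : nat -> nat -> Cplx) (i0 n : nat) i j :=
  Cadd (M (skip i0 i) j) (Cmul (Cmul (M (skip i0 i) n) (Cinv (M i0 n))) (Cmul Cm1 (M i0 j))).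

Lemma eliminate_solution M m n i0 b : (i0 <= m)%nat -> M i0 n <> C0 ->
  nontrivial_solution (eliminate M i0 n) m n b -> exists a, nontrivial_solution M (S m) (S n) a.
Proof.
  intros Hi0 Np [[i1 [Hi1 Nb]] Eb].
  set (Sn := csum (fun k => Cmul (b k) (M (skip i0 k) n)) m).
  set (a := fun i => if Nat.eqb i i0 then Cmul Cm1 (Cmul Sn (Cinv (M i0 n)))
                     else b (if Nat.ltb i i0 then i else pred i)).
  assert (Ar : forall i, a (skip i0 i) = b i).
  { intro i. unfold a, skip. destruct (Nat.ltb_spec i i0).
    - destruct (Nat.eqb_spec i i0); [lia|]. destruct (Nat.ltb_spec i i0); [reflexivity|lia].
    - destruct (Nat.eqb_spec (S i) i0); [lia|].
      destruct (Nat.ltb_spec (S i) i0); [lia|reflexivity]. }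
  assert (A0 : a i0 = Cmul Cm1 (Cmul Sn (Cinv (M i0 n))))
    by (unfold a; rewrite Nat.eqb_refl; reflexivity).
  exists a. split.
  - exists (skip i0 i1). split; [unfold skip; destruct (Nat.ltb_spec i1 i0); lia|].
    rewrite Ar. exact Nb.
  - intros j Hj. rewrite (csum_skip _ m i0), A0 by exact Hi0.
    rewrite (csum_ext _ (fun i => Cmul (b i) (M (skip i0 i) j)))
      by (intros; rewrite Ar; reflexivity).
    destruct (Nat.eq_dec j n) as [->|Nj].
    + fold Sn. pose proof (Cmul_inv (M i0 n) Np) as Hp.
      replace (Cmul (Cmul Cm1 (Cmul Sn (Cinv (M i0 n)))) (M i0 n))
        with (Cmul Cm1 (Cmul Sn (Cmul (M i0 n) (Cinv (M i0 n))))) by cring.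
      rewrite Hp. cring.
    + specialize (Eb j ltac:(lia)). unfold eliminate in Eb.
      rewrite (csum_ext _ (fun i => Cadd (Cmul (b i) (M (skip i0 i) j))
        (Cmul (Cmul (b i) (M (skip i0 i) n)) (Cmul (Cinv (M i0 n)) (Cmul Cm1 (M i0 j)))))) in Eb
        by (intros; cring).
      rewrite csum_add_mul in Eb. fold Sn in Eb. rewrite <- Eb. cring.
Qed.

Lemma homogeneous_system_solvable n :
  forall m M, (n < m)%nat -> exists a, nontrivial_solution M m n a.
Proof.
  induction n; intros m M Hnm.
  - exists (fun _ => C1). split; [exists O; split; [lia | apply C1_neq_C0]|]. intros; lia.
  - destruct (classic (exists i0, (i0 < m)%nat /\ M i0 n <> C0)) as [[i0 [Hi0 Np]]|Nall].
    + destruct m as [|m]; [lia|].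
      destruct (IHn m (eliminate M i0 n) ltac:(lia)) as [b Hb].
      apply (eliminate_solution M m n i0 b); [lia | exact Np | exact Hb].
    + destruct (IHn m M ltac:(lia)) as [a [Na Ea]]. exists a. split; [exact Na|].
      intros j Hj. destruct (Nat.eq_dec j n) as [->|Nj]; [|apply Ea; lia].
      apply csum_zero. intros i Hi.
      assert (M i n = C0) as -> by (apply NNPP; intro; apply Nall; eauto). cring.
Qed.

(** * Dimension of the eigenspaces *)

Lemma converges_scal (H : Hilbert) (u : nat -> H) x a :
  converges u x -> converges (fun n => hscal a (u n)) (hscal a x).
Proof.
  intros Hu eps eps0. pose proof (Cabs_ge0 a).
  destruct (Hu (eps / (Cabs a + 1))) as [N HN]; [apply Rdiv_lt_0_compat; lra|].
  exists N. intros n Hn. rewrite <- hscal_hsub, norm_scal.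
  specialize (HN n Hn). pose proof (norm_ge0 H (hsub (u n) x)).
  apply Rle_lt_trans with ((Cabs a + 1) * norm (hsub (u n) x)); [nra|].
  replace eps with ((Cabs a + 1) * (eps / (Cabs a + 1))) by (field; lra).
  apply Rmult_lt_compat_l; lra.
Qed.

Section EigenSpace.
Variable H : Hilbert.
Variable A : Op H H.

Lemma eigenspace_subspace l : subspace (eigenspace A l).
Proof.
  split; [|split].
  - split; [apply dom_zero|]. rewrite <- (hscal_C0 _ hzero) at 1.
    rewrite app_scal, hscal_C0, hscal_zero by apply dom_zero. reflexivity.
  - intros x y [Dx Ex] [Dy Ey]. split; [apply dom_add; auto|].
    rewrite app_add, Ex, Ey by auto. symmetry. apply hscal_distr_v.
  - intros a x [Dx Ex]. split; [apply dom_scal; auto|].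
    rewrite app_scal, Ex, !hscal_assoc by exact Dx. f_equal. cring.
Qed.

Lemma eigenspace_closed l : closed_op A -> closed_set (eigenspace A l).
Proof.
  intros Cl u x Hu Cu. destruct (Cl u x (hscal l x)) as [Dx Ex].
  - intro n. apply Hu.
  - exact Cu.
  - intros eps eps0. destruct (converges_scal H u x l Cu eps eps0) as [N HN].
    exists N. intros n Hn. destruct (Hu n) as [_ ->]. apply HN, Hn.
  - split; auto.
Qed.

End EigenSpace.

Section BasisComparison.
Variables H K : Hilbert.
Variable T : H -> K.
Hypothesis Tadd : forall x y, T (hadd x y) = hadd (T x) (T y).
Hypothesis Tscal : forall a x, T (hscal a x) = hscal a (T x).
Hypothesis Tbound : exists M, forall x, norm (T x) <= M * norm x.
Hypothesis Tinj : forall x y, T x = T y -> x = y.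
Variables (V : H -> Prop) (W : K -> Prop).
Hypothesis TVW : forall x, V x -> W (T x).
Hypothesis Wsub : subspace W.
Variables (SV : H -> Prop) (SW : K -> Prop).
Hypothesis HSV : orthonormal_basis V SV.
Hypothesis HSW : orthonormal_basis W SW.

Lemma orthogonal_to_basis_zero v : W v -> (forall b, SW b -> hinner v b = C0) -> v = hzero.
Proof. intros Wv O. destruct HSW as [_ [_ D]]. apply (orthogonal_total_zero _ SW); auto. Qed.

Lemma T_basis_orthogonal_zero e : SV e -> (forall b, SW b -> hinner (T e) b = C0) -> False.
Proof.
  intros Se O. destruct HSV as [SVV [[S1 _] _]].
  assert (e = hzero) as ->.
  { apply Tinj. rewrite (lin_zero _ _ T Tscal).
    apply orthogonal_to_basis_zero; [apply TVW, SVV, Se | exact O]. }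
  apply C1_neq_C0. rewrite <- (S1 _ Se). apply hinner_0l.
Qed.

Lemma basis_orthofam (e : nat -> H) m : (forall i, (i < m)%nat -> SV (e i)) ->
  (forall i j, (i < m)%nat -> (j < m)%nat -> e i = e j -> i = j) -> orthofam e m.
Proof.
  intros S I i j Hi Hj. destruct HSV as [_ [[O1 O2] _]].
  destruct (Nat.eq_dec i j) as [->|N]; [apply O1 | apply O2]; auto.
Qed.

(* More than [length lW] distinct basis vectors of [V] would have a nontrivial combination [v]
   with [T v] orthogonal to the basis of [W]. *)
Lemma basis_count_le lW : listing SW lW -> forall (e : nat -> H) m,
  (forall i, (i < m)%nat -> SV (e i)) ->
  (forall i j, (i < m)%nat -> (j < m)%nat -> e i = e j -> i = j) -> (m <= length lW)%nat.
Proof.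
  intros [_ HW] e m Se Ie. destruct (Nat.le_gt_cases m (length lW)) as [L|L]; [exact L|]. exfalso.
  destruct (homogeneous_system_solvable (length lW) m
    (fun i j => hinner (T (e i)) (nth j lW hzero)) L) as [a [[i0 [Hi0 Na]] Ea]].
  set (v := vsum a e m).
  assert (v = hzero) as Ev.
  { apply Tinj. rewrite (lin_zero _ _ T Tscal). apply orthogonal_to_basis_zero.
    - unfold v. rewrite lin_vsum by auto. apply vsum_in; auto.
      intros i Hi. apply TVW, (proj1 HSV), Se, Hi.
    - intros s Ss. apply HW, In_nth with (d := hzero) in Ss. destruct Ss as [j [Hj <-]].
      unfold v. rewrite lin_vsum, inner_vsum_l by auto. apply Ea, Hj. }
  pose proof (inner_vsum_orthofam _ a e m m i0 (basis_orthofam e m Se Ie) (le_n _) Hi0) as E.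
  fold v in E. rewrite Ev, hinner_0l in E. destruct (Nat.ltb_spec i0 m); [|lia]. auto.
Qed.

Lemma card_le_basis_finite : (exists lW, listing SW lW) -> card_le SV SW.
Proof.
  intros [lW FW].
  destruct (finite_or_dedekind_infinite H hzero SV) as [[lV FV]|[h [hS hI]]].
  - assert (Lm : (length lV <= length lW)%nat).
    { destruct FV as [NDV HV]. apply (basis_count_le lW FW (fun i => nth i lV hzero)).
      - intros i Hi. apply HV, nth_In, Hi.
      - intros i j Hi Hj E. eapply NoDup_nth; eauto. }
    destruct (listing_index H hzero SV lV FV) as [idx Hidx].
    destruct FW as [NDW HW].
    exists (fun x => nth (idx x) lW hzero). split.
    + intros x Sx. apply HW, nth_In. destruct (Hidx x Sx). lia.
    + intros x y Sx Sy E. destruct (Hidx x Sx) as [Lx Ex]. destruct (Hidx y Sy) as [Ly Ey].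
      assert (idx x = idx y) by (eapply NoDup_nth; eauto; lia). congruence.
  - exfalso. pose proof (basis_count_le lW FW h (S (length lW)) (fun i _ => hS i)
      (fun i j _ _ E => hI i j E)). lia.
Qed.

Lemma bessel_level_set_finite (b : K) (k : nat) :
  exists l, listing (fun e => SV e /\ / (INR k + 1) <= Cabs2 (hinner (T e) b)) l.
Proof.
  destruct (finite_or_dedekind_infinite H hzero
    (fun e => SV e /\ / (INR k + 1) <= Cabs2 (hinner (T e) b))) as [F|[h [hS hI]]]; [exact F|].
  exfalso. destruct Tbound as [M HM].
  set (C := (M * norm b) * (M * norm b)). set (d := / (INR k + 1)).
  assert (d0 : 0 < d) by (unfold d; apply Rinv_0_lt_compat; pose proof (pos_INR k); lra).
  destruct (INR_unbounded (C / d)) as [m Hm].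
  pose proof (bessel_bounded_functional T M b h m Tadd Tscal HM
    (basis_orthofam h m (fun i _ => proj1 (hS i)) (fun i j _ _ => hI i j))) as Bs.
  pose proof (rsum_ge _ d m (fun i _ => proj2 (hS i))).
  assert (C / d * d = C) by (field; lra).
  assert (C / d * d < INR m * d) by (apply Rmult_lt_compat_r; lra).
  fold C in Bs. lra.
Qed.

(* Each basis vector [b] of [W] meets only countably many [T e] non-orthogonally (Bessel), and
   each [T e] meets some [b]: the basis of [V] injects into [SW x nat], equipotent to [SW]. *)
Lemma card_le_basis_infinite : dedekind_infinite SW -> card_le SV SW.
Proof.
  intro NI.
  apply card_le_trans with (B := fun p : K * nat => SW (fst p)); [|apply card_prod_nat_le, NI].
  destruct (choice (fun b (c : H -> nat) => forall e e', SV e -> SV e' ->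
      hinner (T e) b <> C0 -> hinner (T e') b <> C0 -> c e = c e' -> e = e')) as [c Hc].
  { intro b. destruct (card_le_nat_of_finite_cover H hzero (fun e => SV e /\ hinner (T e) b <> C0)
      (fun k e => SV e /\ / (INR k + 1) <= Cabs2 (hinner (T e) b)) (bessel_level_set_finite b))
      as [c [_ Hc]].
    - intros e [Se Ne]. destruct (archimed_cor1 _ (Cabs2_pos _ Ne)) as [k [Hk Hk0]].
      exists k. split; [exact Se|]. left. eapply Rle_lt_trans; [|exact Hk].
      apply Rinv_le_contravar; [apply lt_0_INR; lia | lra].
    - exists c. intros. apply Hc; auto. }
  destruct (choice (fun e b => SV e -> SW b /\ hinner (T e) b <> C0)) as [bs Hbs].
  { intro e. destruct (classic (SV e)) as [Se|Se].
    - destruct (classic (exists b, SW b /\ hinner (T e) b <> C0)) as [[b Hb]|Nb].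
      + exists b. auto.
      + exfalso. apply (T_basis_orthogonal_zero e Se). intros b Sb.
        apply NNPP. intro N. apply Nb. eauto.
    - exists hzero. intro; contradiction. }
  exists (fun e => (bs e, c (bs e) e)). split.
  - intros e Se. apply Hbs, Se.
  - intros e e' Se Se' E. injection E as E1 E2. rewrite <- E1 in E2.
    destruct (Hbs e Se) as [_ N1]. destruct (Hbs e' Se') as [_ N2]. rewrite <- E1 in N2.
    apply (Hc (bs e)); auto.
Qed.

Lemma card_le_basis : card_le SV SW.
Proof.
  destruct (finite_or_dedekind_infinite K hzero SW) as [F|N].
  - apply card_le_basis_finite, F.
  - apply card_le_basis_infinite, N.
Qed.

End BasisComparison.

Lemma card_le_sig {X Y : Type} (A : X -> Prop) (B : Y -> Prop) : card_le A B ->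
  exists f : {x : X | A x} -> {y : Y | B y}, forall a b, f a = f b -> a = b.
Proof.
  intros [f [f1 f2]]. exists (fun x => exist _ (f (proj1_sig x)) (f1 _ (proj2_sig x))).
  intros [a Ha] [b Hb] E. apply (f_equal (@proj1_sig _ _)) in E. simpl in E.
  apply f2 in E; auto. subst. f_equal. apply proof_irrelevance.
Qed.

Theorem proposition3p10 (H K : Hilbert) (A : Op H H) (B : Op K K) (T : H -> K)
  (hAc : closed_op A) (hAd : densely_defined A)
  (hBc : closed_op B) (hBd : densely_defined B)
  (hT : quasi_similar_via T A B) :
  ((forall l, point_spectrum A l -> point_spectrum B l) /\
   (forall l, point_spectrum A l -> multiplicity_le A B l)) /\
  (forall l, residual_spectrum B l -> residual_spectrum A l) /\
  ((forall y, image T (dom A) y <-> dom B y) ->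
     forall l, point_spectrum B l <-> point_spectrum A l) /\
  ((exists M, forall x, norm x <= M * norm (T x)) ->
     core (image T (dom A)) B ->
     forall l, point_spectrum B l -> spectrum A l).
Proof.
  pose proof hT as [[[Tadd [Tscal Tb]] _] [Tinj _]].
  split; [split|split; [|split]].
  - apply (point_spectrum_quasi_similar H K A B T hT).
  - intros l _.
    destruct (orthonormal_basis_exists H _ (eigenspace_subspace H A l)
      (eigenspace_closed H A l hAc)) as [SV HSV].
    destruct (orthonormal_basis_exists K _ (eigenspace_subspace K B l)
      (eigenspace_closed K B l hBc)) as [SW HSW].
    exists SV, SW. split; [exact HSV | split; [exact HSW|]]. apply card_le_sig.
    apply (card_le_basis H K T Tadd Tscal Tb Tinj _ _
      (intertwining_eigenspace H K A B T hT l) (eigenspace_subspace K B l) SV SW HSV HSW).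
  - apply (residual_spectrum_quasi_similar H K A B T hT).
  - intros Him l. split.
    + apply (point_spectrum_quasi_similar_onto H K A B T hT l Him).
    + apply (point_spectrum_quasi_similar H K A B T hT).
  - intros HTinv Hcore l. apply (point_spectrum_in_spectrum H K A B T hT l HTinv Hcore).
Qed.
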